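(* Let $q$ be an odd prime, $n \geq 1$ an integer, and $v = q^n$. Let $k$ be an odd positive integer. Then there are no integers $a_1, \ldots, a_k$ with $1 \leq a_j < v$ for all $j$ such that $\prod_{j=1}^k a_j = \prod_{j=1}^k (v - a_j)$. *)

From mathcomp Require Import all_boot.
Set Implicit Arguments. Unset Strict Implicit. Unset Printing Implicit Defensive.

From mathcomp Require Import all_boot all_algebra.
Import GRing.Theory.

Set Implicit Arguments.
Unset Strict Implicit.
Unset Printing Implicit Defensive.

(* Write each a_j = q^(e_j) u_j with q not dividing u_j.  Then v - a_j = q^(e_j) (q^(n - e_j) - u_j)
   with e_j < n, so the q'-part of v - a_j is congruent to -u_j modulo q.  Taking q'-parts of
   the hypothetical identity and reducing modulo q gives P = (-1)^k P = -P for the product P of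
   the u_j, hence 2P = 0 in F_q, impossible as q is odd and q divides no u_j. *)

Lemma partn_prod (I : Type) (r : seq I) (P : pred I) (F : I -> nat) (pi : nat_pred) :
  (forall i, P i -> 0 < F i) ->
  (\prod_(i <- r | P i) F i)`_pi = \prod_(i <- r | P i) (F i)`_pi.
Proof.
move=> F_gt0.
suff [] : 0 < \prod_(i <- r | P i) F i /\
          (\prod_(i <- r | P i) F i)`_pi = \prod_(i <- r | P i) (F i)`_pi by [].
apply: (big_ind2 (fun m p => 0 < m /\ m`_pi = p)) => [|m1 p1 m2 p2 [m1_gt0 <-] [m2_gt0 <-]|i Pi].
- by rewrite partn1.
- by rewrite muln_gt0 m1_gt0 m2_gt0 partnM.
- by rewrite F_gt0.
Qed.

Lemma prodrN_odd_eq0 (R : idomainType) (k : nat) (x : 'I_k -> R) :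
  (2%:R != 0 :> R)%R -> odd k ->
  (\prod_(j < k) - x j = \prod_(j < k) x j)%R -> (\prod_(j < k) x j = 0)%R.
Proof.
move=> two_neq0 k_odd; rewrite prodrN card_ord -signr_odd k_odd expr1 mulN1r.
move/eqP; rewrite eq_sym -subr_eq0 opprK -mulr2n -mulr_natr mulf_eq0 (negPf two_neq0) orbF.
by move/eqP.
Qed.

Section OddPrimePower.

Variables q n : nat.
Hypothesis q_prime : prime q.

Lemma Fp_p'part_neq0 (a : nat) : ((a`_q^')%:R != 0 :> 'F_q)%R.
Proof.
by rewrite -(dvdn_pcharf (pchar_Fp q_prime)) -p'natE ?part_pnat.
Qed.

Lemma Fp_p'part_subn_pfactor (e u : nat) : ~~ (q %| u) -> q ^ e * u < q ^ n ->
  (((q ^ n - q ^ e * u)`_q^')%:R = - u%:R :> 'F_q)%R.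
Proof.
move=> q_ndvd_u qeu_lt.
have q_gt0 := prime_gt0 q_prime.
have qe_gt0 : 0 < q ^ e by rewrite expn_gt0 q_gt0.
have u_gt0 : 0 < u by rewrite lt0n; apply: contraNneq q_ndvd_u => ->.
have e_lt : e < n.
  rewrite -(ltn_exp2l _ _ (prime_gt1 q_prime)); apply: leq_ltn_trans qeu_lt.
  by rewrite leq_pmulr.
have u_lt : u < q ^ (n - e).
  by rewrite -(ltn_pmul2l qe_gt0) -expnD subnKC // ltnW.
have sub_eq : q ^ n - q ^ e * u = q ^ e * (q ^ (n - e) - u).
  by rewrite mulnBr -expnD subnKC // ltnW.
have q_dvd_pow : q %| q ^ (n - e) by rewrite dvdn_exp // subn_gt0.
have cofactor_p'nat : q^'.-nat (q ^ (n - e) - u).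
  by rewrite p'natE // dvdn_subr //; exact: ltnW.
rewrite sub_eq partnM //; last by rewrite subn_gt0.
rewrite part_p'nat; last by rewrite pnatNK pnatX pnat_id.
rewrite mul1n part_pnat_id // natrB; last exact: ltnW.
by rewrite natrX pchar_Fp_0 // expr0n subn_eq0 leqNgt e_lt sub0r.
Qed.

Lemma Fp_p'part_subn (a : nat) : 0 < a < q ^ n ->
  (((q ^ n - a)`_q^')%:R = - (a`_q^')%:R :> 'F_q)%R.
Proof.
case/andP=> a_gt0 a_lt.
rewrite -{1}(partnC q a_gt0) p_part Fp_p'part_subn_pfactor -?p'natE ?part_pnat //.
by rewrite -p_part partnC.
Qed.

End OddPrimePower.

Theorem lemma4p10 (q n k : nat) (a : 'I_k -> nat) :
  prime q -> odd q -> 1 <= n -> odd k ->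
  (forall j, 1 <= a j < q ^ n) ->
  \prod_(j < k) a j <> \prod_(j < k) (q ^ n - a j).
Proof.
move=> q_prime q_odd _ k_odd a_range prod_eq.
have two_neq0 : (2%:R != 0 :> 'F_q)%R.
  rewrite -(dvdn_pcharf (pchar_Fp q_prime)).
  by apply: contraL q_odd; rewrite dvdn_prime2 // => /eqP->.
have p'parts_eq : \prod_(j < k) (a j)`_q^' = \prod_(j < k) (q ^ n - a j)`_q^'.
  by rewrite -!partn_prod ?prod_eq // => j _; have /andP[a_gt0 a_lt] := a_range j;
     rewrite ?subn_gt0.
have := congr1 (fun m => (m%:R : 'F_q)%R) p'parts_eq.
rewrite /= !natr_prod (eq_bigr _ (fun j _ => Fp_p'part_subn q_prime (a_range j))).
move/esym/(prodrN_odd_eq0 two_neq0 k_odd)/eqP.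
by rewrite prodf_seq_eq0 => /hasP[j _]; rewrite (negPf (Fp_p'part_neq0 q_prime _)).
Qed.
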